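(* Let $G=(V,E)$ be a transient, connected, simple, locally finite graph with fixed vertex $o$ and fixed rotor mechanism $(m_x)_{x\in V}$. For any initial rotor configuration $\rho$, any $n\geq1$, and any $t\geq 0$, \[ M_t(\rho,n)=n\,\frac{\mathcal{G}(o)}{\deg(o)}. \]
   Context: For $x\in V$, $\mathcal{E}_x$ is the set of outgoing directed edges $(x,y)$ with $y$ a neighbor of $x$, and $\deg(x)=|\mathcal{E}_x|$. A rotor mechanism is a choice, for each $x$, of a bijection $m_x:\mathcal{E}_x\to\mathcal{E}_x$ with exactly one orbit. A rotor configuration is a map $\rho$ with $\rho(x)\in\mathcal{E}_x$ for each $x$. $\mathcal{G}(x)$ is the expected number of visits to $x$ by simple random walk on $G$ started at $o$. Weight of a directed edge $(x,y)$: writing $(x,y_i):=m_x^i(x,y)$, \[ w(x,y):=\frac{-1}{\deg(x)}\sum_{i=0}^{\deg(x)-1} i\,\frac{\mathcal{G}(y_{i+1})}{\deg(y_{i+1})}. \] Experiment: given $\rho$ and $n\ge1$, define $X_t^{(0)},\dots,X_t^{(n-1)}$ and $\rho_t$ ($t\ge0$) by: $X_0^{(i)}=o$ for all $i$, $\rho_0=\rho$. Let $i_t:=t+1\bmod n$. Particle $i$ has returned to $o$ by time $t$ if $X_t^{(i)}=o$ and $X_s^{(i)}\ne o$ for some $s<t$. If particle $i_t$ has returned to $o$ by time $t$, then $\rho_{t+1}=\rho_t$ and all positions stay the same. Otherwise $\rho_{t+1}(x)=m_x(\rho_t(x))$ for $x=X_t^{(i_t)}$ and $\rho_{t+1}(x)=\rho_t(x)$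 otherwise; $X_{t+1}^{(i_t)}$ is the target vertex of $\rho_{t+1}(X_t^{(i_t)})$ and $X_{t+1}^{(i)}=X_t^{(i)}$ for $i\ne i_t$. Range: $R_t:=\{X_s^{(i)}: i\in\{0,\dots,n-1\},\ s\le t\}$. Define \[ M_t(\rho,n):=\sum_{i=0}^{n-1}\frac{\mathcal{G}(X_t^{(i)})}{\deg(X_t^{(i)})}+\frac{\min\{t,n\}}{\deg(o)}+\sum_{x\in R_t}\bigl(w(\rho_t(x))-w(\rho(x))\bigr). \] *)

From HB Require Import structures.
From mathcomp Require Import all_boot all_order all_algebra.
From mathcomp Require Import all_classical all_reals all_analysis.
Set Implicit Arguments. Unset Strict Implicit. Unset Printing Implicit Defensive.
Import Order.TTheory GRing.Theory Num.Theory numFieldNormedType.Exports.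
Local Open Scope ring_scope.

Section RotorDefs.
Variables (R : realType) (V : eqType) (o : V) (nbrs : V -> seq V).

(* The graph: nbrs x is the (finite) list of neighbours of x; the outgoing
   directed edge (x,y) is represented by its target y \in nbrs x. *)
Definition deg (x : V) : nat := size (nbrs x).

Definition simple_graph : Prop :=
  forall x, [/\ uniq (nbrs x), x \notin nbrs x &
                forall y, (y \in nbrs x) = (x \in nbrs y)].

Definition adj (x y : V) : bool := y \in nbrs x.

Definition connected_graph : Prop :=
  forall x, exists s : seq V, path adj o s /\ last o s = x.

(* P_o(simple random walk is at x at time t) *)
Fixpoint srw_prob (t : nat) (x : V) : R :=
  match t with
  | 0 => (x == o)%:R
  | t'.+1 => \sum_(y <- nbrs x) srw_prob t' y / (deg y)%:R
  end.

Definition green (x : V) : R := limn (series (fun t => srw_prob t x) : R^nat).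

Definition transient : Prop := cvgn (series (fun t => srw_prob t o) : R^nat).

Definition rotor_mechanism (m : V -> V -> V) : Prop :=
  forall x, [/\ {in nbrs x, forall y, m x y \in nbrs x},
                {in nbrs x &, injective (m x)} &
                {in nbrs x &, forall y z, exists k, iter k (m x) y = z}].

Definition rotor_config (rho : V -> V) : Prop := forall x, rho x \in nbrs x.

Variable m : V -> V -> V.

Definition weight (x y : V) : R :=
  - ((deg x)%:R)^-1 *
    \sum_(i < deg x) (i%:R * (green (iter i.+1 (m x) y)
                               / (deg (iter i.+1 (m x) y))%:R)).

Variables (rho : V -> V) (n : nat).

(* state at a time: positions of particles (index i < n) and rotors *)
Definition state := ((nat -> V) * (V -> V))%type.
Definition init_state : state := (fun _ => o, rho).

Definition upd (T : eqType) (U : Type) (f : T -> U) (a : T) (b : U) : T -> U :=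
  fun z => if z == a then b else f z.

(* h = [:: state_0; ...; state_t] ; particle i has returned to o by time t *)
Definition returned (h : seq state) (t i : nat) : bool :=
  ((nth init_state h t).1 i == o) &&
  has (fun s => (nth init_state h s).1 i != o) (iota 0 t).

Definition step (t : nat) (h : seq state) : state :=
  let: (pos, rot) := last init_state h in
  let i := (t.+1 %% n)%N in
  if returned h t i then (pos, rot) else
  let x := pos i in
  let rot' := upd rot x (m x (rot x)) in
  (upd pos i (rot' x), rot').

Fixpoint hist (t : nat) : seq state :=
  match t with
  | 0 => [:: init_state]
  | t'.+1 => rcons (hist t') (step t' (hist t'))
  end.

Definition Xpos (t i : nat) : V := (last init_state (hist t)).1 i.
Definition rotor (t : nat) : V -> V := (last init_state (hist t)).2.

Definition range_t (t : nat) : seq V :=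
  undup [seq Xpos s i | s <- iota 0 t.+1, i <- iota 0 n].

Definition Mt (t : nat) : R :=
  \sum_(i < n) green (Xpos t i) / (deg (Xpos t i))%:R
  + (minn t n)%:R / (deg o)%:R
  + \sum_(x <- range_t t) (weight x (rotor t x) - weight x (rho x)).

End RotorDefs.

From HB Require Import structures.
From mathcomp Require Import all_boot all_order all_algebra.
From mathcomp Require Import all_classical all_reals all_analysis.
From mathcomp Require Import ring zify.
Set Implicit Arguments. Unset Strict Implicit. Unset Printing Implicit Defensive.
Import Order.TTheory GRing.Theory Num.Theory numFieldNormedType.Exports.
Local Open Scope ring_scope.

(* [M_t] does not depend on [t]. If the active particle has not returned, it
   sits at some [x], turns the rotor there from [y] to [y' = m_x y] and moves to
   [y'].  The particle sum changes by [G(y')/deg y' - G(x)/deg x].  As [m_x] has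
   a single orbit, the weight telescopes:
   [w(x,y') - w(x,y) = (1/deg x) sum_(z ~ x) G(z)/deg z - G(y')/deg y'],
   and the harmonicity [G(x) = 1_(x = o) + sum_(z ~ x) G(z)/deg z] turns this
   into [G(x)/deg x - 1_(x = o)/deg x - G(y')/deg y'].  A particle is at [o]
   without having returned exactly during the first [n] steps, so the indicator
   is cancelled by the growth of [min(t,n)/deg o]; vertices entering the range
   still carry their initial rotor and contribute nothing.  [G] is finite
   everywhere because [G(o)] is and, along an edge [x ~ y], the partial sums
   satisfy [S_N(y) <= deg y * S_(N+1)(x)]. *)

Lemma big_update (M : zmodType) (I : eqType) (r : seq I) (F G : I -> M) i :
  (forall j, j != i -> G j = F j) -> uniq r -> i \in r ->
  \sum_(j <- r) G j = \sum_(j <- r) F j - F i + G i.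
Proof.
move=> GF r_uniq r_i; rewrite !(bigD1_seq i) //= (eq_bigr _ (fun j => GF j)).
by rewrite addrC (addrC (F i)) addrK.
Qed.

Lemma big_uniq_support (M : nmodType) (I : eqType) (s1 s2 : seq I) (F : I -> M) :
  uniq s1 -> uniq s2 -> {subset s1 <= s2} -> (forall z, z \notin s1 -> F z = 0) ->
  \sum_(z <- s2) F z = \sum_(z <- s1) F z.
Proof.
move=> s1_uniq s2_uniq sub F0.
rewrite (bigID (fun z => z \in s1)) /= [X in _ + X]big1 ?addr0; last by move=> z /F0.
rewrite -big_filter; apply: perm_big; apply: uniq_perm; rewrite ?filter_uniq // => z.
by rewrite mem_filter andb_idr //; exact: sub.
Qed.

Lemma sum_traject (M : nmodType) (T : Type) (f : T -> T) (F : T -> M) x k :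
  \sum_(z <- traject f x k) F z = \sum_(i < k) F (iter i f x).
Proof.
elim: k => [|k IH]; first by rewrite big_nil big_ord0.
by rewrite trajectSr -cats1 big_cat big_seq1 IH big_ord_recr.
Qed.

Lemma sum_mul_index_shift (R : comNzRingType) (c : nat -> R) d : c d.+1 = c 1%N ->
  \sum_(i < d) i%:R * c i.+2 - \sum_(i < d) i%:R * c i.+1 =
  d%:R * c 1%N - \sum_(i < d) c i.+1.
Proof.
move=> c_period.
have shift_index : \sum_(i < d) i%:R * c i.+1 + d%:R * c d.+1 =
                   \sum_(i < d) i%:R * c i.+2 + \sum_(i < d) c i.+2.
  have -> : \sum_(i < d) i%:R * c i.+1 + d%:R * c d.+1 =
            \sum_(i < d.+1) i%:R * c i.+1 by rewrite big_ord_recr.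
  rewrite big_ord_recl /= mul0r add0r -big_split /=.
  by apply: eq_bigr => i _; rewrite mulrSr mulrDl mul1r.
have shift : \sum_(i < d) c i.+1 + c d.+1 = c 1%N + \sum_(i < d) c i.+2.
  have -> : \sum_(i < d) c i.+1 + c d.+1 = \sum_(i < d.+1) c i.+1 by rewrite big_ord_recr.
  by rewrite big_ord_recl.
rewrite c_period in shift_index shift.
have sum_shift : \sum_(i < d) c i.+2 = \sum_(i < d) c i.+1.
  by apply: (addrI (c 1%N)); rewrite -shift addrC.
rewrite sum_shift in shift_index.
have -> : \sum_(i < d) i%:R * c i.+2 =
          \sum_(i < d) i%:R * c i.+1 + d%:R * c 1%N - \sum_(i < d) c i.+1.
  by rewrite shift_index addrK.
ring.
Qed.

Section GreenFunction.
Variables (R : realType) (V : eqType) (o : V) (nbrs : V -> seq V).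
Hypothesis deg_gt0 : forall x, (0 < deg nbrs x)%N.

Local Notation p := (srw_prob R o nbrs).
Local Notation green_series x := (series (fun t => p t x) : R^nat).

Lemma srw_prob_ge0 t x : 0 <= p t x.
Proof.
elim: t x => [|t IH] x /=; first by case: (x == o).
by apply: sumr_ge0 => y _; rewrite divr_ge0 ?IH.
Qed.

Lemma nondecreasing_green_series x : nondecreasing_seq (green_series x).
Proof. by apply: nondecreasing_series => t _ _; exact: srw_prob_ge0. Qed.

Lemma green_seriesS x N : green_series x N.+1 =
  (x == o)%:R + \sum_(y <- nbrs x) green_series y N / (deg nbrs y)%:R.
Proof.
rewrite /series /= big_nat_recl //=; congr (_ + _).
by rewrite exchange_big /=; apply: eq_bigr => y _; rewrite mulr_suml.
Qed.

Lemma srw_prob_nbr_le a b t : b \in nbrs a -> p t b <= (deg nbrs b)%:R * p t.+1 a.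
Proof.
move=> b_a; rewrite -ler_pdivrMl ?ltr0n // mulrC /= (big_rem b) //= lerDl.
by apply: sumr_ge0 => y _; rewrite divr_ge0 ?srw_prob_ge0.
Qed.

Lemma green_series_nbr_le a b N : b \in nbrs a ->
  green_series b N <= (deg nbrs b)%:R * green_series a N.+1.
Proof.
move=> b_a; rewrite /series /= big_nat_recl // mulrDr -[X in X <= _]add0r.
rewrite lerD ?mulr_ge0 ?srw_prob_ge0 // mulr_sumr.
by apply: ler_sum => t _; exact: srw_prob_nbr_le.
Qed.

Lemma green_series_bounded_path a s : path (adj nbrs) a s ->
  (exists B, forall N, green_series a N <= B) ->
  exists B, forall N, green_series (last a s) N <= B.
Proof.
elim: s a => [|b s IH] a //= /andP[a_b b_s] [B le_B]; apply: IH => //.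
exists ((deg nbrs b)%:R * B) => N.
by apply: le_trans (green_series_nbr_le N a_b) _; apply: ler_wpM2l.
Qed.

Hypotheses (conn : connected_graph o nbrs) (tr : transient R o nbrs).

Lemma cvg_green_series x : cvgn (green_series x).
Proof.
have [s [path_s <-]] := conn x.
have [B le_B] : exists B, forall N, green_series (last o s) N <= B.
  apply: green_series_bounded_path path_s _.
  exists (limn (green_series o)) => N.
  exact: nondecreasing_cvgn_le (nondecreasing_green_series o) tr N.
apply: nondecreasing_is_cvgn; first exact: nondecreasing_green_series.
by exists B => _ [N _ <-].
Qed.

Lemma green_harmonic x : green R o nbrs x =
  (x == o)%:R + \sum_(y <- nbrs x) green R o nbrs y / (deg nbrs y)%:R.
Proof.
apply: cvg_lim => //; rewrite -cvg_shiftS /=.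
under eq_fun do rewrite green_seriesS.
apply: cvgD; first exact: cvg_cst.
apply: cvg_big => [|y _]; first exact: add_continuous.
by apply: cvgMr_tmp; exact: cvg_green_series.
Qed.

End GreenFunction.

Section SingleOrbit.
Variables (T : eqType) (N : seq T) (f : T -> T).
Hypotheses (N_uniq : uniq N) (f_closed : {in N, forall y, f y \in N})
  (f_inj : {in N &, injective f})
  (f_orbit : {in N &, forall y z, exists k, iter k f y = z}).

Lemma iter_closed k y : y \in N -> iter k f y \in N.
Proof. by move=> yN; elim: k => //= k IH; exact: f_closed. Qed.

Lemma iter_inj_in k : {in N &, injective (iter k f)}.
Proof.
elim: k => // k IH y z yN zN /= /f_inj e.
by apply: IH => //; apply: e; exact: iter_closed.
Qed.

Lemma traject_closed y k : y \in N -> {subset traject f y k <= N}.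
Proof. by move=> yN _ /trajectP[i _ ->]; exact: iter_closed. Qed.

Lemma traject_cover y k : y \in N -> iter k f y = y -> (0 < k)%N ->
  {subset N <= traject f y k}.
Proof.
move=> yN f_k_y k_gt0 z zN; have [j <-] := f_orbit yN zN.
suff /loopingP : looping f y k by apply.
by rewrite /looping f_k_y; case: k k_gt0 {f_k_y} => // k _; exact: mem_head.
Qed.

Lemma iter_size_id y : y \in N -> iter (size N) f y = y.
Proof.
move=> yN.
have : looping f y (size N).
  rewrite -[looping _ _ _]negbK -looping_uniq; apply/negP => traject_uniq.
  have := uniq_leq_size traject_uniq (traject_closed yN).
  by rewrite size_traject ltnn.
move=> /trajectP[i lt_iN f_N_y].
set j := (size N - i)%N.
have f_j_y : iter j f y = y.
  apply: (@iter_inj_in i); [exact: iter_closed | exact: yN |].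
  by rewrite -iterD subnKC ?(ltnW lt_iN).
have := uniq_leq_size N_uniq (traject_cover yN f_j_y _).
rewrite size_traject subn_gt0 => /(_ lt_iN) le_N_j.
have i0 : i = 0%N by move: le_N_j; rewrite /j; lia.
by rewrite f_N_y i0.
Qed.

Lemma perm_traject y : y \in N -> perm_eq (traject f y (size N)) N.
Proof.
move=> yN.
have N_gt0 : (0 < size N)%N by case: (N) yN.
have cover := traject_cover yN (iter_size_id yN) N_gt0.
have size_le : (size (traject f y (size N)) <= size N)%N by rewrite size_traject.
have [_ eq_N] := uniq_min_size N_uniq cover size_le.
apply: uniq_perm (leq_size_uniq N_uniq cover size_le) N_uniq _ => z.
by rewrite eq_N.
Qed.

End SingleOrbit.

Section RotorWeight.
Variables (R : realType) (V : eqType) (o : V) (nbrs : V -> seq V) (m : V -> V -> V).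
Hypothesis rmech : rotor_mechanism nbrs m.

Local Notation h z := (green R o nbrs z / (deg nbrs z)%:R).
Local Notation w := (weight R o nbrs m).

Lemma weight_rotate x y : uniq (nbrs x) -> y \in nbrs x ->
  w x (m x y) - w x y = (deg nbrs x)%:R^-1 * \sum_(z <- nbrs x) h z - h (m x y).
Proof.
move=> x_uniq yN; have [m_closed m_inj m_orbit] := rmech x.
have y1N : m x y \in nbrs x by exact: m_closed.
have deg_gt0 : (0 < deg nbrs x)%N by rewrite /deg; case: (nbrs x) yN.
have deg_neq0 : (deg nbrs x)%:R != 0 :> R by rewrite pnatr_eq0 -lt0n.
rewrite /weight; under eq_bigr do rewrite -iterSr.
set c := fun k => h (iter k (m x) y).
have c_period : c (deg nbrs x).+1 = c 1%N.
  by rewrite /c iterSr (iter_size_id x_uniq m_closed m_inj m_orbit y1N).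
have sum_nbrs : \sum_(z <- nbrs x) h z = \sum_(i < deg nbrs x) c i.+1.
  rewrite -(perm_big _ (perm_traject x_uniq m_closed m_inj m_orbit y1N)) sum_traject.
  by apply: eq_bigr => i _; rewrite /c iterSr.
have := sum_mul_index_shift c_period; rewrite -sum_nbrs /c /= => /eqP.
rewrite subr_eq => /eqP ->.
(* Abstracting [h (m x y)] spares [field] the side condition [deg (m x y) != 0]. *)
set H := h (m x y).
by field.
Qed.

End RotorWeight.

Section RotorWalk.
Variables (V : eqType) (o : V) (nbrs : V -> seq V) (m : V -> V -> V) (rho : V -> V) (n : nat).
Hypotheses (n_gt0 : (0 < n)%N) (simple : simple_graph nbrs)
  (rmech : rotor_mechanism nbrs m) (rho_nbr : rotor_config nbrs rho).
Local Open Scope nat_scope.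

Local Notation hist := (hist o m rho n).
Local Notation X := (Xpos o m rho n).
Local Notation rot := (rotor o m rho n).
Local Notation rng := (range_t o m rho n).
Local Notation last_state t := (last (init_state o rho) (hist t)).
Local Notation active t := (t.+1 %% n).
Local Notation returned_at t := (returned o rho (hist t) t (active t)).
Local Notation cur t := (X t (active t)).
Local Notation next t := (m (cur t) (rot t (cur t))).

Lemma size_hist t : size (hist t) = t.+1.
Proof. by elim: t => //= t IH; rewrite size_rcons IH. Qed.

Lemma nth_hist t s : s <= t -> nth (init_state o rho) (hist t) s = last_state s.
Proof.
elim: t => [|t IH]; first by rewrite leqn0 => /eqP ->.
rewrite leq_eqVlt => /orP[/eqP -> | lt_st].
  by rewrite /= nth_rcons size_hist ltnn eqxx last_rcons.
by rewrite /= nth_rcons size_hist lt_st IH.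
Qed.

Lemma returnedE t : returned_at t =
  (cur t == o) && has (fun s => X s (active t) != o) (iota 0 t).
Proof.
rewrite /returned nth_hist //; congr andb.
by apply: eq_in_has => s; rewrite mem_iota add0n => /ltnW le_st; rewrite nth_hist.
Qed.

Lemma last_histS t : last_state t.+1 =
  if returned_at t then last_state t
  else (upd (X t) (active t) (next t), upd (rot t) (cur t) (next t)).
Proof.
rewrite /= last_rcons /step /Xpos /rotor.
by case: (last_state t) => pos r /=; case: ifP => // _; rewrite /upd eqxx.
Qed.

Lemma Xpos_returned t : returned_at t -> X t.+1 = X t.
Proof. by move=> ret; rewrite /Xpos last_histS ret. Qed.

Lemma rotor_returned t : returned_at t -> rot t.+1 = rot t.
Proof. by move=> ret; rewrite /rotor last_histS ret. Qed.

Lemma Xpos_moved t : ~~ returned_at t -> X t.+1 = upd (X t) (active t) (next t).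
Proof. by move=> mv; rewrite /Xpos last_histS (negbTE mv). Qed.

Lemma rotor_moved t : ~~ returned_at t -> rot t.+1 = upd (rot t) (cur t) (next t).
Proof. by move=> mv; rewrite /rotor last_histS (negbTE mv). Qed.

Lemma Xpos_active_moved t : ~~ returned_at t -> X t.+1 (active t) = next t.
Proof. by move=> mv; rewrite Xpos_moved // /upd eqxx. Qed.

Lemma Xpos_inactive t j : j != active t -> X t.+1 j = X t j.
Proof.
move=> j_inactive; have [ret|mv] := boolP (returned_at t); first by rewrite Xpos_returned.
by rewrite Xpos_moved // /upd (negbTE j_inactive).
Qed.

Lemma rotor_nbr t z : rot t z \in nbrs z.
Proof.
elim: t z => [|t IH] z; first exact: rho_nbr.
have [ret|mv] := boolP (returned_at t); first by rewrite rotor_returned.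
rewrite rotor_moved // /upd; case: eqP => [->|_]; last exact: IH.
by have [m_closed _ _] := rmech (cur t); exact/m_closed/IH.
Qed.

Lemma Xpos_unmoved s i : (forall r, r < s -> active r != i) -> X s i = o.
Proof.
elim: s => // s IH inactive; rewrite Xpos_inactive 1?eq_sym ?inactive //.
by apply: IH => r lt_rs; apply: inactive; exact: ltnW.
Qed.

Lemma first_round t : t < n -> cur t = o /\ ~~ returned_at t.
Proof.
move=> lt_tn.
have active_neq r : r < t -> active r != active t.
  move=> lt_rt; rewrite (@modn_small r.+1) ?(leq_ltn_trans lt_rt) //.
  have [lt_t1n | le_nt1] := ltnP t.+1 n; first by rewrite modn_small // eqSS ltn_eqF.
  have -> : t.+1 = n by apply/anti_leq; rewrite lt_tn le_nt1.
  by rewrite modnn.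
have at_o s : s <= t -> X s (active t) = o.
  move=> le_st; apply: Xpos_unmoved => r lt_rs.
  by apply: active_neq; exact: leq_trans lt_rs le_st.
split; first exact: at_o.
rewrite returnedE negb_and; apply/orP; right; apply/hasPn => s.
by rewrite mem_iota add0n => /andP[_ lt_st]; rewrite negbK at_o ?(ltnW lt_st).
Qed.

Lemma returned_at_origin t : n <= t -> cur t = o -> returned_at t.
Proof.
move=> le_nt cur_o; set r := t %% n.
(* At time [r] the same particle made its first step, to a neighbour of [o]. *)
have lt_rn : r < n by rewrite ltn_mod.
have active_r : active r = active t by rewrite /r -addn1 modnDml addn1.
have [cur_r_o not_ret_r] := first_round lt_rn.
have moved_nbr : X r.+1 (active t) \in nbrs o.
  rewrite -active_r Xpos_active_moved // cur_r_o.
  by have [m_closed _ _] := rmech o; apply: m_closed; exact: rotor_nbr.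
have [_ o_loopless _] := simple o.
have ne_rt : r.+1 != t.
  by apply: contraNneq o_loopless => e; move: moved_nbr; rewrite e cur_o.
rewrite returnedE cur_o eqxx /=; apply/hasP; exists r.+1.
  by rewrite mem_iota add0n ltn_neqAle ne_rt (leq_trans lt_rn le_nt).
by apply: contraTneq moved_nbr => ->.
Qed.

Lemma returned_late t : returned_at t -> n <= t.
Proof. by apply: contraTT; rewrite -ltnNge => /first_round[]. Qed.

Lemma cur_at_origin t : ~~ returned_at t -> (cur t == o) = (t < n).
Proof.
move=> mv; have [lt_tn | le_nt] := ltnP t n; first by rewrite (first_round lt_tn).1 eqxx.
by apply: contraNF mv => /eqP; exact: returned_at_origin.
Qed.

Lemma range_memP t z :
  reflect (exists s j, [/\ s <= t, j < n & z = X s j]) (z \in rng t).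
Proof.
rewrite /range_t mem_undup; apply: (iffP allpairsP).
  move=> [[s j] [s_t j_n ->]]; exists s, j.
  by move: s_t j_n; rewrite !mem_iota !add0n ltnS => /andP[_ s_t] /andP[_ j_n].
by move=> [s [j [s_t j_n ->]]]; exists (s, j); rewrite !mem_iota !add0n ltnS.
Qed.

Lemma mem_range s t j : s <= t -> j < n -> X s j \in rng t.
Proof. by move=> s_t j_n; apply/range_memP; exists s, j. Qed.

Lemma range_subS t : {subset rng t <= rng t.+1}.
Proof. by move=> z /range_memP[s [j [s_t j_n ->]]]; rewrite mem_range // leqW. Qed.

Lemma cur_in_range t : cur t \in rng t.
Proof. by rewrite mem_range // ltn_pmod. Qed.

Lemma rotor_out_range t z : z \notin rng t -> rot t z = rho z.
Proof.
elim: t => [//|t IH] z_out.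
have {}IH := IH (contra (@range_subS t z) z_out).
have [ret|mv] := boolP (returned_at t); first by rewrite rotor_returned.
rewrite rotor_moved // /upd; case: eqP => // z_cur.
by move: z_out; rewrite z_cur (mem_range (leqnSn t)) // ltn_pmod.
Qed.

End RotorWalk.

Lemma minnSl (t n : nat) : minn t.+1 n = (minn t n + (t < n))%N.
Proof. by case: ltnP => /=; lia. Qed.

Section Invariant.
Variables (R : realType) (V : eqType) (o : V) (nbrs : V -> seq V) (m : V -> V -> V)
  (rho : V -> V) (n : nat).
Hypotheses (n_gt0 : (0 < n)%N) (simple : simple_graph nbrs) (conn : connected_graph o nbrs)
  (tr : transient R o nbrs) (rmech : rotor_mechanism nbrs m) (rho_nbr : rotor_config nbrs rho).

Local Notation X := (Xpos o m rho n).
Local Notation rot := (rotor o m rho n).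
Local Notation rng := (range_t o m rho n).
Local Notation active t := (t.+1 %% n)%N.
Local Notation returned_at t := (returned o rho (hist o m rho n t) t (active t)).
Local Notation cur t := (X t (active t)).
Local Notation next t := (m (cur t) (rot t (cur t))).
Local Notation h z := (green R o nbrs z / (deg nbrs z)%:R).
Local Notation w := (weight R o nbrs m).
Local Notation D s z := (w z (rot s z) - w z (rho z)).
Local Notation M := (Mt R o nbrs m rho n).

Let deg_gt0 x : (0 < deg nbrs x)%N.
Proof. by have := rho_nbr x; rewrite /deg; case: (nbrs x). Qed.

Lemma origin_indicator t : ~~ returned_at t ->
  (cur t == o)%:R / (deg nbrs (cur t))%:R = (t < n)%:R / (deg nbrs o)%:R :> R.
Proof.
move=> mv; rewrite -(cur_at_origin n_gt0 simple rmech rho_nbr mv).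
by case: eqP => [->|_]; rewrite ?mul0r.
Qed.

Lemma weight_moved t : ~~ returned_at t ->
  w (cur t) (next t) - w (cur t) (rot t (cur t)) =
  h (cur t) - (t < n)%:R / (deg nbrs o)%:R - h (next t).
Proof.
move=> mv; have [cur_uniq _ _] := simple (cur t).
rewrite weight_rotate ?rotor_nbr // (green_harmonic deg_gt0 conn tr (cur t)).
by rewrite mulrDl origin_indicator //; ring.
Qed.

Lemma sum_Xpos_moved t : ~~ returned_at t ->
  \sum_(j < n) h (X t.+1 j) = \sum_(j < n) h (X t j) - h (cur t) + h (next t).
Proof.
move=> mv; pose i := Ordinal (ltn_pmod t.+1 n_gt0).
have frame (j : 'I_n) : j != i -> h (X t.+1 j) = h (X t j).
  by move=> ne_ji; rewrite Xpos_inactive //; apply: contra ne_ji => /eqP e; apply/eqP/val_inj.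
by rewrite (big_update frame) ?index_enum_uniq ?mem_index_enum //= Xpos_active_moved.
Qed.

Lemma sum_range_S t : \sum_(z <- rng t.+1) D t z = \sum_(z <- rng t) D t z.
Proof.
apply: big_uniq_support; rewrite ?undup_uniq //; first exact: range_subS.
by move=> z z_out; rewrite rotor_out_range ?subrr.
Qed.

Lemma sum_range_moved t : ~~ returned_at t ->
  \sum_(z <- rng t.+1) D t.+1 z =
  \sum_(z <- rng t) D t z + (w (cur t) (next t) - w (cur t) (rot t (cur t))).
Proof.
move=> mv.
have frame z : z != cur t -> D t.+1 z = D t z.
  by move=> ne_z; rewrite rotor_moved // /upd (negbTE ne_z).
have cur_in : cur t \in rng t.+1 by apply: range_subS; apply: cur_in_range.
rewrite (big_update frame) ?undup_uniq // sum_range_S rotor_moved // /upd eqxx.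
ring.
Qed.

Lemma Mt_step t : M t.+1 = M t.
Proof.
rewrite /Mt; have [ret|mv] := boolP (returned_at t).
  have le_nt := returned_late ret.
  rewrite Xpos_returned // rotor_returned // sum_range_S.
  by rewrite !(minn_idPr _) // leqW.
rewrite sum_Xpos_moved // sum_range_moved // weight_moved // minnSl natrD.
ring.
Qed.

Lemma Mt0 : M 0 = n%:R * green R o nbrs o / (deg nbrs o)%:R.
Proof.
rewrite /Mt min0n mul0r addr0 [X in _ + X]big1 ?addr0; last by move=> z _; rewrite subrr.
by rewrite /Xpos /= sumr_const card_ord -[RHS]mulrA mulr_natl.
Qed.

End Invariant.

Theorem proposition2p1 (R : realType) (V : eqType) (o : V)
  (nbrs : V -> seq V) (m : V -> V -> V) :
  simple_graph nbrs ->
  connected_graph o nbrs ->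
  transient R o nbrs ->
  rotor_mechanism nbrs m ->
  forall (rho : V -> V) (n t : nat),
    rotor_config nbrs rho ->
    (1 <= n)%N ->
    Mt R o nbrs m rho n t = n%:R * green R o nbrs o / (deg nbrs o)%:R.
Proof.
move=> simple conn tr rmech rho n t rho_nbr n_gt0.
elim: t => [|t IH]; first exact: Mt0.
by rewrite Mt_step.
Qed.
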